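(* Let $G$ be a finite simple graph on $n\ge3$ vertices and let $A\ne0$ be a real symmetric weighted adjacency matrix of $G$. Then $$\sup_{\boldsymbol v\in\mathcal S_n}\{|\boldsymbol v|^2:\langle\boldsymbol v,A\boldsymbol v\rangle=0\}=\min\{W_A(x):\lambda_{\min}(A)^{-1}\le x\le\lambda_{\max}(A)^{-1}\}.$$
   Context: A weighted adjacency matrix is a real symmetric $A$ with $A_{ii}=0$ and $A_{ij}=0$ for non-adjacent $i\ne j$; for $A\neq 0$, $\lambda_{\min}(A)<0<\lambda_{\max}(A)$. $\mathcal S_n=\{\boldsymbol v\in\mathbb R^n:\langle\boldsymbol 1,\boldsymbol v\rangle=|\boldsymbol v|^2\}$ with $\boldsymbol 1$ the all-ones vector. $W_A(x)=\sum_{\lambda\in\sigma(A)}\frac{\langle\boldsymbol 1,P_\lambda\boldsymbol 1\rangle}{1-\lambda x}$ with $P_\lambda$ the orthogonal eigenprojections of $A$, terms with $\langle\boldsymbol 1,P_\lambda\boldsymbol 1\rangle=0$ omitted, and value $+\infty$ at a pole. *)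

From HB Require Import structures.
From mathcomp Require Import all_boot all_order all_algebra.
From mathcomp Require Import all_classical all_reals ereal.
Set Implicit Arguments. Unset Strict Implicit. Unset Printing Implicit Defensive.
Import Order.TTheory GRing.Theory Num.Theory.
Local Open Scope ring_scope.
Local Open Scope classical_set_scope.

Section Defs.
Variables (R : realType) (n : nat).

Definition simple_graph (e : rel 'I_n) : Prop :=
  symmetric e /\ irreflexive e.

Definition weighted_adjacency (e : rel 'I_n) (A : 'M[R]_n) : Prop :=
  A^T = A /\ (forall i, A i i = 0) /\
  (forall i j, i != j -> ~~ e i j -> A i j = 0).

Definition dotv (u v : 'cV[R]_n) : R := (u^T *m v) 0 0.
Definition ones : 'cV[R]_n := const_mx 1.

Definition Sn : set 'cV[R]_n := [set v | dotv ones v = dotv v v].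

Definition spectrum (A : 'M[R]_n) : set R := [set l | eigenvalue A l].

Definition orth_proj m (M : 'M[R]_(m, n)) : 'M[R]_n :=
  let B := row_base M in (B^T *m invmx (B *m B^T) *m B).

Definition eigenproj (A : 'M[R]_n) (l : R) : 'M[R]_n :=
  orth_proj (eigenspace A l).

Definition wcoef (A : 'M[R]_n) (l : R) : R := dotv ones (eigenproj A l *m ones).

Definition kept (A : 'M[R]_n) : set R :=
  [set l | eigenvalue A l /\ wcoef A l != 0].

Definition W (A : 'M[R]_n) (x : R) : \bar R :=
  if `[< exists l, kept A l /\ 1 - l * x = 0 >] then +oo%E
  else ((\sum_(l \in kept A) wcoef A l / (1 - l * x))%R)%:E.

End Defs.

(* For x in J = [lmin^-1, lmax^-1] the matrix I - xA is positive semidefinite and,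
   away from the poles of W_A, W_A(x) = <1, u> with u = (I - xA)^-1 1.  Expanding
   0 <= <u - v, (I - xA)(u - v)> for a feasible v gives |v|^2 <= W_A(x).
   Conversely u is itself feasible as soon as <u, A u> = W_A'(x) vanishes.  Near an
   end lam^-1 of J whose eigenvalue lam is kept, lam W_A' tends to +oo, so W_A'
   changes sign on J unless the end at which it has the wrong sign is the pole of an
   eigenvalue lam that is not kept; there an eigenvector of lam, orthogonal to 1 and
   to u, can be added to u to make it feasible without changing <1, u>.
   The spectral decomposition of the real symmetric A used throughout comes from
   maximising the Rayleigh quotient on a compact sphere. *)

From mathcomp Require Import all_boot all_order all_algebra.
From mathcomp Require Import all_classical all_reals ereal.
From mathcomp Require Import topology normedtype derive.
From mathcomp Require polyrcf.
From mathcomp Require Import ring lra.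
Import Order.TTheory GRing.Theory Num.Theory numFieldNormedType.Exports.
Local Open Scope ring_scope.
Local Open Scope classical_set_scope.
Set Implicit Arguments. Unset Strict Implicit. Unset Printing Implicit Defensive.

Section Dotv.
Variables (R : realType) (n : nat).
Implicit Types (u v w : 'cV[R]_n) (M : 'M[R]_n).

Lemma dotvE u v : dotv u v = \sum_i u i 0 * v i 0.
Proof. by rewrite /dotv mxE; apply: eq_bigr => i _; rewrite mxE. Qed.

Lemma dotvC u v : dotv u v = dotv v u.
Proof. by rewrite !dotvE; apply: eq_bigr => i _; rewrite mulrC. Qed.

Lemma dotvDr u v w : dotv u (v + w) = dotv u v + dotv u w.
Proof. by rewrite /dotv mulmxDr mxE. Qed.

Lemma dotvZr a u v : dotv u (a *: v) = a * dotv u v.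
Proof. by rewrite /dotv -scalemxAr mxE. Qed.

Lemma dotvBr u v w : dotv u (v - w) = dotv u v - dotv u w.
Proof. by rewrite dotvDr -scaleN1r dotvZr mulN1r. Qed.

Lemma dotv_sumr (I : Type) (s : seq I) (F : I -> 'cV[R]_n) u :
  dotv u (\sum_(i <- s) F i) = \sum_(i <- s) dotv u (F i).
Proof. by rewrite /dotv mulmx_sumr summxE; apply: eq_bigr. Qed.

Lemma dotvDl u v w : dotv (v + w) u = dotv v u + dotv w u.
Proof. by rewrite dotvC dotvDr !(dotvC u). Qed.

Lemma dotvZl a u v : dotv (a *: u) v = a * dotv u v.
Proof. by rewrite dotvC dotvZr dotvC. Qed.

Lemma dotvBl u v w : dotv (v - w) u = dotv v u - dotv w u.
Proof. by rewrite dotvC dotvBr !(dotvC u). Qed.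

Lemma dotv_suml (I : Type) (s : seq I) (F : I -> 'cV[R]_n) u :
  dotv (\sum_(i <- s) F i) u = \sum_(i <- s) dotv (F i) u.
Proof. by rewrite dotvC dotv_sumr; apply: eq_bigr => i _; rewrite dotvC. Qed.

Lemma dotv0r u : dotv u 0 = 0.
Proof. by rewrite /dotv mulmx0 mxE. Qed.

Lemma dotv0l u : dotv 0 u = 0.
Proof. by rewrite dotvC dotv0r. Qed.

Lemma dotvvE u : dotv u u = \sum_i u i 0 ^+ 2.
Proof. by rewrite dotvE; apply: eq_bigr => i _; rewrite expr2. Qed.

Lemma dotv_ge0 u : 0 <= dotv u u.
Proof. by rewrite dotvvE sumr_ge0 // => i _; rewrite sqr_ge0. Qed.

Lemma dotv_eq0 u : (dotv u u == 0) = (u == 0).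
Proof.
apply/idP/eqP => [|->]; last by rewrite dotv0l.
rewrite dotvvE psumr_eq0 => [/allP u0|i _]; last exact: sqr_ge0.
apply/matrixP => i j; rewrite (ord1 j) mxE.
by apply/eqP; rewrite -sqrf_eq0; exact: implyP (u0 i (mem_index_enum i)) isT.
Qed.

Lemma dotv_gt0 u : (0 < dotv u u) = (u != 0).
Proof. by rewrite lt_def dotv_ge0 dotv_eq0 andbT. Qed.

Lemma dotv_mulmx M u v : dotv u (M *m v) = dotv (M^T *m u) v.
Proof. by rewrite /dotv trmx_mul trmxK mulmxA. Qed.

Lemma dotv_sym M u v : M^T = M -> dotv u (M *m v) = dotv (M *m u) v.
Proof. by move=> MT; rewrite dotv_mulmx MT. Qed.

Lemma dotv_delta (i : 'I_n) v : dotv (delta_mx i 0) v = v i 0.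
Proof. by rewrite /dotv trmx_delta -rowE mxE. Qed.

End Dotv.

Lemma quad_ge0_linear_eq0 (R : realFieldType) (a b : R) :
  (forall t, 0 <= t * a + t ^+ 2 * b) -> a = 0.
Proof.
move=> ge0; apply/eqP; apply: contraT => a0.
set c := `|b| + 1; have c0 : 0 < c by rewrite ltr_wpDl.
set t := - a / c; have ta : a = - (t * c) by rewrite mulfVK ?gt_eqF ?opprK.
have : 0 <= (t * a + t ^+ 2 * b) * c ^+ 2 by rewrite mulr_ge0 ?sqr_ge0.
have -> : (t * a + t ^+ 2 * b) * c ^+ 2 = a ^+ 2 * (b - c) by rewrite ta; ring.
have : 0 < a ^+ 2 by rewrite lt_def sqrf_eq0 a0 sqr_ge0.
have := ler_norm b; rewrite /c; nra.
Qed.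

Section QuadraticForm.
Variables (R : realType) (n : nat) (Q : 'M[R]_n).
Hypothesis symQ : Q^T = Q.

Lemma psd_isotropic (v w : 'cV[R]_n) :
  (forall t, 0 <= dotv (v + t *: w) (Q *m (v + t *: w))) ->
  dotv v (Q *m v) = 0 -> dotv v (Q *m w) = 0.
Proof.
move=> ge0 v0.
suff : 2 * dotv v (Q *m w) = 0 by lra.
apply: (@quad_ge0_linear_eq0 _ _ (dotv w (Q *m w))) => t.
have := ge0 t; rewrite mulmxDr -scalemxAr !dotvDl !dotvDr !dotvZl !dotvZr v0.
by rewrite (dotv_sym w) // (dotvC (Q *m w)); nra.
Qed.

Lemma psd_diag0_eq0 : (forall i, Q i i = 0) ->
  (forall w, 0 <= dotv w (Q *m w)) -> Q = 0.
Proof.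
move=> diag0 ge0; apply/matrixP => i j; rewrite mxE.
have entry k l : dotv (delta_mx k 0) (Q *m delta_mx l 0) = Q k l.
  by rewrite dotv_delta -colE mxE.
by rewrite -entry psd_isotropic // entry.
Qed.

End QuadraticForm.

Section OrthProj.
Variables (R : realType) (n m : nat) (M : 'M[R]_(m, n)).

Lemma row_free_gram_unit k (B : 'M[R]_(k, n)) : row_free B -> B *m B^T \in unitmx.
Proof.
move=> freeB; rewrite -row_free_unit -kermx_eq0; apply/rowV0P => y /sub_kermxP yBB.
have : dotv (y *m B)^T (y *m B)^T == 0.
  by rewrite /dotv trmxK trmx_mul mulmxA -(mulmxA y) yBB mul0mx mxE.
by rewrite dotv_eq0 trmx_eq0 mulmx_free_eq0 // => /eqP.
Qed.

Lemma orth_proj_sym : (orth_proj M)^T = orth_proj M.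
Proof.
rewrite /orth_proj; move: (row_base M) => B.
by rewrite !trmx_mul trmxK trmx_inv trmx_mul trmxK mulmxA.
Qed.

Lemma orth_proj_id (v : 'cV[R]_n) : (v^T <= M)%MS -> orth_proj M *m v = v.
Proof.
move=> vM; have /submxP [y vy] : (v^T <= row_base M)%MS by rewrite eq_row_base.
have BB := row_free_gram_unit (row_base_free M).
rewrite /orth_proj; move: (row_base M) BB vy => B BB vy.
by rewrite -(trmxK v) vy trmx_mul -!mulmxA (mulmxA B) mulKmx.
Qed.

Lemma orth_proj_eq0 (v : 'cV[R]_n) :
  (forall x : 'rV_n, (x <= M)%MS -> x *m v = 0) -> orth_proj M *m v = 0.
Proof.
move=> orth_v; have Bv : row_base M *m v = 0.
  apply/row_matrixP => i; rewrite row_mul row0; apply: orth_v.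
  by rewrite (submx_trans (row_sub i _)) // eq_row_base.
by rewrite /orth_proj; move: (row_base M) Bv => B Bv; rewrite -!mulmxA Bv !mulmx0.
Qed.

Lemma orth_proj_sub (v : 'cV[R]_n) : ((orth_proj M *m v)^T <= M)%MS.
Proof.
have sB : (row_base M <= M)%MS by rewrite eq_row_base.
rewrite /orth_proj; move: (row_base M) sB => B sB.
by rewrite !trmx_mul trmxK !mulmxA (submx_trans (submxMl _ _) sB).
Qed.

End OrthProj.

Section SymmetricEigen.
Variables (R : realType) (n : nat) (A : 'M[R]_n).
Hypothesis symA : A^T = A.
Implicit Types (l r : R) (u v : 'cV[R]_n).

Local Notation P l := (eigenproj A l).

Lemma eigenspace_colP l v : reflect (A *m v = l *: v) (v^T <= eigenspace A l)%MS.
Proof.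
apply: (iffP eigenspaceP) => [|Av].
  by move/(congr1 trmx); rewrite trmx_mul symA trmxK linearZ /= trmxK.
by rewrite -{1}symA -trmx_mul Av linearZ.
Qed.

Lemma eigenprojE l v : A *m (P l *m v) = l *: (P l *m v).
Proof. exact/eigenspace_colP/orth_proj_sub. Qed.

Lemma eigenproj_id l v : A *m v = l *: v -> P l *m v = v.
Proof. by move/eigenspace_colP; exact: orth_proj_id. Qed.

Lemma dotv_eigenproj l v : dotv v (P l *m v) = dotv (P l *m v) (P l *m v).
Proof.
by rewrite -{1}(eigenproj_id (eigenprojE l v)) dotv_sym // orth_proj_sym.
Qed.

Lemma eigenvector_orth l r u v : A *m u = l *: u -> A *m v = r *: v -> l != r ->
  dotv u v = 0.
Proof.
move=> Au Av lr; have := dotv_sym u v symA; rewrite Au Av dotvZl dotvZr.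
by move/eqP; rewrite -subr_eq0 -mulrBl mulf_eq0 subr_eq0 eq_sym (negbTE lr) => /eqP.
Qed.

Lemma eigenproj_eq0 l r v : A *m v = l *: v -> l != r -> P r *m v = 0.
Proof.
move=> Av lr; apply: orth_proj_eq0 => x /eigenspaceP xA.
have xAT : A *m x^T = r *: x^T.
  by have := congr1 trmx xA; rewrite trmx_mul symA linearZ.
apply/matrixP => i j; rewrite !ord1 [RHS]mxE.
by have := eigenvector_orth xAT Av; rewrite eq_sym lr /dotv trmxK => ->.
Qed.

End SymmetricEigen.

Section RayleighQuotient.
Variables (R : realType) (n : nat).
Implicit Types (Q N : 'M[R]_n) (v w : 'cV[R]_n).

Lemma quadform_continuous Q : continuous (fun w : 'rV[R]_n => dotv w^T (Q *m w^T)).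
Proof.
have -> : (fun w : 'rV[R]_n => dotv w^T (Q *m w^T)) =
    (fun w : 'rV[R]_n => \sum_(i <- index_enum 'I_n) \sum_(j <- index_enum 'I_n)
               w ord0 i * Q i j * w ord0 j).
  apply/funext => w; rewrite dotvE; apply: eq_bigr => i _.
  by rewrite !mxE mulr_sumr; apply: eq_bigr => j _; rewrite !mxE mulrA.
apply: continuous_big; first exact: add_continuous.
move=> i _; apply: continuous_big; first exact: add_continuous.
move=> j _.
have -> : (fun w : 'rV[R]_n => w ord0 i * Q i j * w ord0 j) =
    ((fun w : 'rV[R]_n => w ord0 i) \* (fun=> Q i j) \* (fun y => y ord0 j)) by [].
move=> w; apply: continuousM; last exact: coord_continuous.
by apply: continuousM; [exact: coord_continuous | exact: cst_continuous].
Qed.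

Lemma dotv_scale_quad Q a v : dotv (a *: v) (Q *m (a *: v)) = a ^+ 2 * dotv v (Q *m v).
Proof. by rewrite -scalemxAr dotvZl dotvZr mulrA expr2. Qed.

Lemma normalize_cV v : v != 0 ->
  exists2 s : R, 0 < s & dotv (s^-1 *: v) (s^-1 *: v) = 1.
Proof.
rewrite -dotv_gt0 => v0; exists (Num.sqrt (dotv v v)); first by rewrite sqrtr_gt0.
rewrite dotvZl dotvZr mulrA -expr2 exprVn sqr_sqrtr ?ltW // mulVf //.
by rewrite gt_eqF.
Qed.

Lemma compact_kernel_sphere N :
  compact [set w : 'rV[R]_n | N *m w^T = 0 /\ dotv w^T w^T = 1].
Proof.
apply: bounded_closed_compact.
  exists 1; split => // r r1 w [_ w1] /=; apply: (@le_trans _ _ 1); last exact: ltW.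
  rewrite [X in X <= _]/Num.norm /= mx_normrE.
  apply: Order.POrderTheory.bigmax_le => // -[i j] _ /=; rewrite (ord1 i).
  rewrite -(ler_pXn2r (n := 2)) ?nnegrE // expr1n real_normK ?num_real // -w1.
  rewrite dotvvE (bigD1 j) //= mxE lerDl.
  by apply: sumr_ge0 => k _; exact: sqr_ge0.
have kerN w : N *m w = 0 <-> dotv w ((N^T *m N) *m w) = 0.
  rewrite -mulmxA dotv_mulmx trmxK; split => [->|/eqP]; first exact: dotv0l.
  by rewrite dotv_eq0 => /eqP.
have -> : [set w : 'rV[R]_n | N *m w^T = 0 /\ dotv w^T w^T = 1] =
    (fun w : 'rV_n => dotv w^T ((N^T *m N) *m w^T)) @^-1` [set 0] `&`
    (fun w : 'rV_n => dotv w^T (1%:M *m w^T)) @^-1` [set 1].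
  by apply/seteqP; split => w /= [/kerN Nw w1]; split; rewrite ?mul1mx in w1 *.
by apply: closedI; apply: closed_comp => [w _|];
  by [exact: quadform_continuous | exact: closed_eq].
Qed.

Lemma rayleigh_max Q N v0 : N *m v0 = 0 -> v0 != 0 ->
  exists2 v, N *m v = 0 /\ dotv v v = 1 &
    forall w, N *m w = 0 -> dotv w (Q *m w) <= dotv v (Q *m v) * dotv w w.
Proof.
move=> Nv0 v00; pose K := [set w : 'rV[R]_n | N *m w^T = 0 /\ dotv w^T w^T = 1].
have Kne : K !=set0.
  have [s s0 s1] := normalize_cV v00.
  by exists (s^-1 *: v0)^T; rewrite /K /= trmxK -scalemxAr Nv0 scaler0.
have [c /set_mem [Nc c1] cmax] := compact_EVT_max Kne (compact_kernel_sphere (N := N))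
  (continuous_subspaceT (@quadform_continuous Q)).
exists c^T => // w Nw; have [-> | w0] := eqVneq w 0.
  by rewrite mulmx0 !dotv0l mulr0.
have [s s0 s1] := normalize_cV w0.
have ww : dotv w w = s ^+ 2.
  by move: s1; rewrite dotvZl dotvZr mulrA -expr2 exprVn mulrC => /divr1_eq.
have Kw : (s^-1 *: w)^T \in K by rewrite inE /K /= trmxK -scalemxAr Nw scaler0.
have := cmax _ Kw; rewrite trmxK dotv_scale_quad exprVn ler_pdivrMl ?exprn_gt0 //.
by rewrite ww mulrC.
Qed.

End RayleighQuotient.

Section SpectralDecomposition.
Variables (R : realType) (n : nat) (A : 'M[R]_n).
Hypothesis symA : A^T = A.
Implicit Types (u v w : 'cV[R]_n).

(* A maximiser v of <w, A w> on the unit sphere of ker N is an eigenvector: with mu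
   the maximum, mu I - A is positive semidefinite on ker N and isotropic at v. *)
Lemma stable_kernel_eigenvector (N : 'M[R]_n) (v0 : 'cV[R]_n) :
  (forall v, N *m v = 0 -> N *m (A *m v) = 0) -> N *m v0 = 0 -> v0 != 0 ->
  exists mu, exists2 v : 'cV[R]_n, N *m v = 0 /\ v != 0 & A *m v = mu *: v.
Proof.
move=> stableN Nv0 v00; have [v [Nv v1] vmax] := rayleigh_max A Nv0 v00.
set mu := dotv v (A *m v); pose C := mu%:M - A.
have Cw w : C *m w = mu *: w - A *m w by rewrite mulmxBl mul_scalar_mx.
have symC : C^T = C by rewrite linearB /= tr_scalar_mx symA.
set u := A *m v - mu *: v.
have Nu : N *m u = 0 by rewrite mulmxBr stableN // -scalemxAr Nv scaler0 subr0.
have Cpsd t : 0 <= dotv (v + t *: u) (C *m (v + t *: u)).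
  have Nvtu : N *m (v + t *: u) = 0 by rewrite mulmxDr -scalemxAr Nu scaler0 addr0.
  by rewrite Cw dotvBr dotvZr subr_ge0 vmax.
have Cv0 : dotv v (C *m v) = 0 by rewrite Cw dotvBr dotvZr v1 mulr1 subrr.
have := psd_isotropic symC Cpsd Cv0.
have Cvu : C *m v = -1 *: u by rewrite Cw scaleN1r opprB.
rewrite dotv_sym // Cvu dotvZl mulN1r => /eqP; rewrite oppr_eq0 dotv_eq0 subr_eq0.
by move/eqP=> Av; exists mu, v => //; split; rewrite -?dotv_eq0 ?v1 ?oner_eq0.
Qed.

Definition eigvals := polyrcf.rootsR (char_poly A).

Lemma mem_eigvals l : (l \in eigvals) = eigenvalue A l.
Proof.
have chA0 : char_poly A != 0 by rewrite monic_neq0 ?char_poly_monic.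
by have := polyrcf.roots_on_rootsR chA0 l; rewrite in_itv /= eigenvalue_root_char.
Qed.

Lemma uniq_eigvals : uniq eigvals.
Proof. exact: polyrcf.uniq_roots. Qed.

Let E := (\sum_(i < size eigvals) eigenspace A eigvals`_i)%MS.

Let eigenspace_sum_kernel0 v : E *m v = 0 -> v = 0.
Proof.
move=> Ev; apply/eqP; apply: contraT => v0.
have stableE w : E *m w = 0 -> E *m (A *m w) = 0.
  have /submxP [X EA] : (E *m A <= E)%MS.
    rewrite sumsmxMr; apply: sumsmxS => i _.
    by have /eigenspaceP -> := submx_refl (eigenspace A eigvals`_i); exact: scalemx_sub.
  by move=> Ew; rewrite mulmxA EA -mulmxA Ew mulmx0.
have [mu [w [Ew w0] Aw]] := stable_kernel_eigenvector stableE Ev v0.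
have /(nthP 0) [i ilt eq_mu] : mu \in eigvals.
  rewrite mem_eigvals; apply/eigenvalueP; exists w^T; rewrite ?trmx_eq0 //.
  by rewrite -{1}symA -trmx_mul Aw linearZ.
have /submxP [y wy] : (w^T <= E)%MS.
  by apply: (sumsmx_sup (Ordinal ilt)) => //=; rewrite eq_mu; exact/eigenspace_colP.
by move: w0; rewrite -dotv_eq0 /dotv wy -mulmxA Ew mulmx0 mxE eqxx.
Qed.

Let eigenspace_sum_full : row_full E.
Proof.
rewrite /row_full -mxrank_tr -/(row_free E^T) -kermx_eq0.
apply/rowV0P => y /sub_kermxP /(congr1 trmx); rewrite trmx_mul trmxK trmx0.
by move/eigenspace_sum_kernel0/(congr1 trmx); rewrite trmxK trmx0.
Qed.

Lemma sum_eigenproj v : \sum_(l <- eigvals) eigenproj A l *m v = v.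
Proof.
have /sub_sumsmxP [x_ vE] := submx_full v^T eigenspace_sum_full.
pose x i := (x_ i *m eigenspace A eigvals`_i)^T.
have Ax i : A *m x i = eigvals`_i *: x i.
  by apply/(eigenspace_colP symA); rewrite /x trmxK submxMl.
have {vE}-> : v = \sum_i x i by rewrite -[v]trmxK vE linear_sum.
rewrite (big_nth 0) big_mkord; under eq_bigr do rewrite mulmx_sumr.
rewrite exchange_big /=.
apply: eq_bigr => i _; rewrite (bigD1 i) //= (eigenproj_id symA (Ax i)) big1 ?addr0 //.
move=> j ji; rewrite (eigenproj_eq0 symA (Ax i)) //.
by rewrite nth_uniq ?uniq_eigvals // eq_sym.
Qed.

End SpectralDecomposition.

Section PoleSums.
Variable R : realFieldType.
Implicit Types (a b d l lam r x : R).

Lemma term_near_pole_ge lam l w d : lam != 0 -> 0 < d <= 1 -> 0 <= w ->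
  l * lam <= lam ^+ 2 ->
  - (`|l * lam| * w) <= lam * (l * w / (1 - l * ((1 - d) / lam)) ^+ 2).
Proof.
move=> lam0 /andP [d0 d1] w0 llam; have lam2 : 0 < lam ^+ 2 by rewrite exprn_even_gt0.
set D := 1 - _; have -> : lam * (l * w / D ^+ 2) = l * lam * w / D ^+ 2 by ring.
have [k0 | k0] := lerP 0 (l * lam).
  by apply: (@le_trans _ _ 0); rewrite ?oppr_le0 ?divr_ge0 ?sqr_ge0 // mulr_ge0.
have D1 : 1 <= D.
  have -> : D = 1 - l * lam * (1 - d) / lam ^+ 2 by rewrite /D; field.
  have : l * lam * (1 - d) <= 0 by nra.
  by rewrite lerDl oppr_ge0 ler_pdivrMr // mul0r.
have y1 : (D ^+ 2)^-1 <= 1 by rewrite invf_le1 ?exprn_ege1 ?exprn_gt0 ?(lt_le_trans ltr01).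
have y0 : 0 <= (D ^+ 2)^-1 by rewrite invr_ge0 sqr_ge0.
have kw : l * lam * w <= 0 by rewrite mulr_le0_ge0 // ltW.
rewrite ltr0_norm // mulNr opprK; move: kw y1; set K := l * lam * w; nra.
Qed.

Lemma sum_near_pole_gt0 (s : seq R) (w : R -> R) lam :
  uniq s -> lam \in s -> lam != 0 -> 0 < w lam ->
  {in s, forall l, 0 <= w l /\ l * lam <= lam ^+ 2} ->
  exists2 d, 0 < d <= 1 &
    0 < lam * \sum_(l <- s) l * w l / (1 - l * ((1 - d) / lam)) ^+ 2.
Proof.
move=> us ls lam0 wlam sw; have lam2 : 0 < lam ^+ 2 by rewrite exprn_even_gt0.
set L := lam ^+ 2 * w lam; have L0 : 0 < L by rewrite mulr_gt0.
set N := \sum_(l <- s | l != lam) `|l * lam| * w l.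
have N0 : 0 <= N.
  by rewrite /N big_seq_cond sumr_ge0 // => l /andP [/sw [wl _] _]; rewrite mulr_ge0.
set d := L / (N + L); have NL0 : N + L != 0 by rewrite gt_eqF ?ltr_wpDl.
have d0 : 0 < d by rewrite divr_gt0 ?ltr_wpDl.
have d1 : d <= 1 by rewrite ler_pdivrMr ?ltr_wpDl // mul1r lerDr.
exists d; first by rewrite d0 d1.
rewrite mulr_sumr (bigD1_seq lam) //=.
have -> : lam * (lam * w lam / (1 - lam * ((1 - d) / lam)) ^+ 2) = L / d ^+ 2.
  have -> : 1 - lam * ((1 - d) / lam) = d by field.
  by rewrite /L; field; rewrite gt_eqF.
have others : - N <= \sum_(l <- s | l != lam)
                       lam * (l * w l / (1 - l * ((1 - d) / lam)) ^+ 2).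
  rewrite /N -sumrN big_seq_cond [leRHS]big_seq_cond; apply: ler_sum.
  by move=> l /andP [/sw [wl llam] _]; rewrite term_near_pole_ge ?d0.
have large : N + L <= L / d ^+ 2.
  have -> : L / d ^+ 2 = (N + L) * d^-1 by rewrite /d; field; rewrite NL0 gt_eqF.
  by rewrite ler_peMr ?invf_ge1 // addr_ge0 // ltW.
lra.
Qed.

End PoleSums.

Section SpectralInterval.
Variables (R : realFieldType) (a b : R).
Hypotheses (a_lt0 : a < 0) (b_gt0 : 0 < b).
Implicit Types (r x : R).

Lemma mul_le1_of_itv x : a^-1 <= x <= b^-1 -> a * x <= 1 /\ b * x <= 1.
Proof.
case/andP => ax xb; split.
  by rewrite -(mulfV (ltr0_neq0 a_lt0)) ler_nM2l.
by rewrite -(mulfV (lt0r_neq0 b_gt0)) ler_pM2l.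
Qed.

Lemma one_sub_mul_ge0 r x : a <= r <= b -> a^-1 <= x <= b^-1 -> 0 <= 1 - r * x.
Proof.
move=> /andP [ar rb] /mul_le1_of_itv [ax bx].
by have [x0 | x0] := lerP 0 x; nra.
Qed.

Lemma one_sub_mul_eq0 r x : a <= r <= b -> a^-1 <= x <= b^-1 -> 1 - r * x = 0 ->
  (r = b /\ x = b^-1) \/ (r = a /\ x = a^-1).
Proof.
move=> /andP [ar rb] /mul_le1_of_itv [ax bx] /eqP; rewrite subr_eq0 eq_sym => /eqP rx.
have inv_of c : c != 0 -> c * x = 1 -> x = c^-1.
  by move=> c0 cx; rewrite -[x](mulKf c0) cx mulr1.
have [x0 | x0 | x0] := ltgtP 0 x.
- have rb' : r = b by nra.
  by left; split => //; apply: inv_of; rewrite ?gt_eqF // -rb'.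
- have ra' : r = a by nra.
  by right; split => //; apply: inv_of; rewrite ?lt_eqF // -ra'.
- by move: rx; rewrite -x0 mulr0; move/eqP; rewrite eq_sym oner_eq0.
Qed.

End SpectralInterval.

Section WeightFunction.
Variables (R : realType) (n : nat) (A : 'M[R]_n).
Hypothesis symA : A^T = A.
Implicit Types (l x : R) (v w : 'cV[R]_n).

Local Notation P l := (eigenproj A l).
Local Notation p l := (eigenproj A l *m ones R n).
Local Notation c l := (wcoef A l).

Definition kept_eigvals := [seq l <- eigvals A | c l != 0].

Lemma mem_kept_eigvals l : (l \in kept_eigvals) = eigenvalue A l && (c l != 0).
Proof. by rewrite mem_filter mem_eigvals andbC. Qed.

Lemma uniq_kept_eigvals : uniq kept_eigvals.
Proof. by rewrite filter_uniq // uniq_eigvals. Qed.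

Lemma keptE : kept A = [set` kept_eigvals].
Proof.
apply/seteqP; split => l; rewrite /kept /= mem_kept_eigvals; first by case=> -> ->.
by case/andP.
Qed.

Lemma wcoefE l : c l = dotv (p l) (p l).
Proof. by rewrite /wcoef dotv_eigenproj. Qed.

Lemma wcoef_ge0 l : 0 <= c l.
Proof. by rewrite wcoefE dotv_ge0. Qed.

Lemma wcoef_eq0 l : (c l == 0) = (p l == 0).
Proof. by rewrite wcoefE dotv_eq0. Qed.

Lemma sum_kept_eigenproj : \sum_(l <- kept_eigvals) p l = ones R n.
Proof.
rewrite big_filter -[RHS](sum_eigenproj symA) [RHS](bigID (fun l => c l != 0)) /=.
by rewrite [X in _ + X]big1 ?addr0 // => l /negPn; rewrite wcoef_eq0 => /eqP.
Qed.

Lemma dotv_sum_eigenproj (a b : R -> R) :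
  dotv (\sum_(l <- kept_eigvals) a l *: p l) (\sum_(l <- kept_eigvals) b l *: p l)
  = \sum_(l <- kept_eigvals) a l * b l * c l.
Proof.
rewrite dotv_suml; apply: eq_big_seq => l lk.
rewrite dotv_sumr (bigD1_seq l) ?uniq_kept_eigvals //= big1_seq ?addr0.
  by rewrite dotvZl dotvZr -wcoefE mulrA.
move=> r /andP [rl _]; rewrite dotvZl dotvZr.
by rewrite (eigenvector_orth symA (eigenprojE symA _ _) (eigenprojE symA _ _))
  1?eq_sym ?mulr0.
Qed.

Lemma dotv_spectral (a b : R) w :
  dotv w ((a%:M + b *: A) *m w) = \sum_(l <- eigvals A) (a + b * l) * dotv w (P l *m w).
Proof.
rewrite -{2}(sum_eigenproj symA w) mulmx_sumr dotv_sumr; apply: eq_bigr => l _.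
by rewrite mulmxDl mul_scalar_mx -scalemxAl eigenprojE // scalerA -scalerDl dotvZr.
Qed.

Lemma psd_spectral (a b : R) : (forall l, eigenvalue A l -> 0 <= a + b * l) ->
  forall w, 0 <= dotv w ((a%:M + b *: A) *m w).
Proof.
move=> ge0 w; rewrite dotv_spectral big_seq; apply: sumr_ge0 => l.
by rewrite mem_eigvals => /ge0 ab; rewrite mulr_ge0 // dotv_eigenproj ?dotv_ge0.
Qed.

Definition feasible : set 'cV[R]_n := [set v | Sn v /\ dotv v (A *m v) = 0].

Definition pencil x : 'M[R]_n := 1%:M - x *: A.

Definition no_pole x := {in kept_eigvals, forall l, 1 - l * x != 0}.

Definition resolvent_ones x := \sum_(l <- kept_eigvals) (1 - l * x)^-1 *: p l.

Definition Wsum x := \sum_(l <- kept_eigvals) c l / (1 - l * x).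

Definition dWsum x := \sum_(l <- kept_eigvals) l * c l / (1 - l * x) ^+ 2.

Lemma pencilE x : pencil x = 1%:M + (- x) *: A.
Proof. by rewrite /pencil scaleNr. Qed.

Lemma pencil_sym x : (pencil x)^T = pencil x.
Proof. by rewrite /pencil linearB /= linearZ /= tr_scalar_mx symA. Qed.

Lemma dotv_pencil x v : dotv v (pencil x *m v) = dotv v v - x * dotv v (A *m v).
Proof. by rewrite mulmxBl mul1mx -scalemxAl dotvBr dotvZr. Qed.

Lemma pencil_resolvent_ones x : no_pole x -> pencil x *m resolvent_ones x = ones R n.
Proof.
move=> np; rewrite -sum_kept_eigenproj mulmx_sumr; apply: eq_big_seq => l lk.
rewrite -scalemxAr mulmxBl mul1mx -scalemxAl eigenprojE // scalerA (mulrC x).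
by rewrite -{1}[p l]scale1r -scalerBl scalerA mulVf ?np // scale1r.
Qed.

Lemma dotv_resolvent_ones x : dotv (resolvent_ones x) (ones R n) = Wsum x.
Proof.
rewrite dotv_suml; apply: eq_bigr => l _.
by rewrite dotvZl dotvC mulrC.
Qed.

Lemma dotv_resolvent_onesA x :
  dotv (resolvent_ones x) (A *m resolvent_ones x) = dWsum x.
Proof.
have -> : A *m resolvent_ones x = \sum_(l <- kept_eigvals) ((1 - l * x)^-1 * l) *: p l.
  by rewrite mulmx_sumr; apply: eq_bigr => l _; rewrite -scalemxAr eigenprojE // scalerA.
by rewrite dotv_sum_eigenproj; apply: eq_bigr => l _; rewrite -exprVn; ring.
Qed.

Lemma W_no_pole x : no_pole x -> W A x = (Wsum x)%:E.
Proof.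
move=> np; rewrite /W asboolF; last first.
  by move=> [l []]; rewrite keptE /= => /np /eqP.
by rewrite keptE -fsbig_seq // uniq_kept_eigvals.
Qed.

Lemma W_pole x l : l \in kept_eigvals -> 1 - l * x = 0 -> W A x = +oo%E.
Proof. by move=> lk lx; rewrite /W asboolT //; exists l; rewrite keptE. Qed.

Lemma feasible_of_pencil x v : pencil x *m v = ones R n -> dotv v (A *m v) = 0 ->
  feasible v /\ dotv v v = dotv (ones R n) v.
Proof.
move=> Mv Av0; have vv : dotv v v = dotv (ones R n) v.
  by rewrite -Mv -dotv_sym ?pencil_sym // dotv_pencil Av0 mulr0 subr0.
by split => //; split => //; rewrite /Sn /= vv.
Qed.

Lemma weak_duality x v : (forall w, 0 <= dotv w (pencil x *m w)) -> feasible v ->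
  ((dotv v v)%:E <= W A x)%E.
Proof.
move=> psd [Sv Av0]; case: (pselect (no_pole x)) => [np | /existsNP [l /not_implyP]].
  rewrite W_no_pole // lee_fin -dotv_resolvent_ones.
  have := psd (resolvent_ones x - v).
  rewrite mulmxBr pencil_resolvent_ones // dotvBl !dotvBr dotv_pencil Av0 mulr0 subr0.
  by rewrite dotv_sym ?pencil_sym // pencil_resolvent_ones // (dotvC v) -Sv; lra.
by case=> lk /negP; rewrite negbK => /eqP lx; rewrite (W_pole lk lx) leey.
Qed.

Lemma dWsum_continuous x : no_pole x -> {for x, continuous dWsum}.
Proof.
move=> np; rewrite /dWsum.
have -> : (fun y => \sum_(l <- kept_eigvals) l * c l / (1 - l * y) ^+ 2) =
    (fun y => \sum_(l <- kept_eigvals | l \in kept_eigvals) l * c l / (1 - l * y) ^+ 2).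
  by apply/funext => y; rewrite big_seq.
apply: cvg_big => [|l /np lx]; first exact: add_continuous.
apply: cvgMl_tmp; apply: cvgV; first by rewrite expf_neq0.
by apply: cvgM; (apply: cvgB; [exact: cvg_cst | apply: cvgMl_tmp; exact: cvg_id]).
Qed.

Lemma feasible_of_dWsum0 x : no_pole x -> dWsum x = 0 ->
  exists2 v, feasible v & dotv v v = Wsum x.
Proof.
move=> np h0; have [fu uu] := feasible_of_pencil (pencil_resolvent_ones np)
  (etrans (dotv_resolvent_onesA x) h0).
by exists (resolvent_ones x); rewrite // uu dotvC dotv_resolvent_ones.
Qed.

Lemma feasible_at_unkept_pole lam : eigenvalue A lam -> c lam = 0 -> lam != 0 ->
  no_pole lam^-1 -> lam * dWsum lam^-1 <= 0 ->
  exists2 v, feasible v & dotv v v = Wsum lam^-1.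
Proof.
(* e lies in the kernel of I - xA and is orthogonal to 1 and to u, so u + t e still
   solves (I - xA) v = 1 and t can be tuned to make <v, A v> vanish. *)
move=> /eigenvalueP [w wA w0] clam lam0 np hlam.
set x := lam^-1; set u := resolvent_ones x; set e := w^T.
have Ae : A *m e = lam *: e by rewrite -{1}symA -trmx_mul wA linearZ.
have de_gt0 : 0 < dotv e e by rewrite dotv_gt0 trmx_eq0.
have e1 : dotv (ones R n) e = 0.
  move/eqP: clam; rewrite wcoef_eq0 => /eqP p0.
  by rewrite -(eigenproj_id symA Ae) dotv_sym ?orth_proj_sym // p0 dotv0l.
have ue : dotv u e = 0.
  rewrite dotv_suml big1_seq // => l /andP [_ lk]; rewrite dotvZl.
  rewrite (eigenvector_orth symA (eigenprojE symA _ _) Ae) ?mulr0 //.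
  by apply: contraTneq lk => ->; rewrite mem_kept_eigvals clam eqxx andbF.
have Me : pencil x *m e = 0.
  by rewrite mulmxBl mul1mx -scalemxAl Ae scalerA mulVf // scale1r subrr.
set q := - dWsum x / (lam * dotv e e).
have q_ge0 : 0 <= q.
  have -> : q = - (lam * dWsum x) / (lam ^+ 2 * dotv e e).
    by rewrite /q; field; rewrite lam0 gt_eqF.
  by rewrite divr_ge0 ?oppr_ge0 // mulr_ge0 ?sqr_ge0 ?ltW.
set t := Num.sqrt q; have tt : t * t = q by rewrite -expr2 sqr_sqrtr.
have Mv : pencil x *m (u + t *: e) = ones R n.
  by rewrite mulmxDr -scalemxAr Me scaler0 addr0 pencil_resolvent_ones.
have Av : dotv (u + t *: e) (A *m (u + t *: e)) = 0.
  rewrite mulmxDr -scalemxAr Ae !dotvDl !dotvDr !dotvZl !dotvZr dotv_resolvent_onesA.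
  rewrite dotv_sym // Ae dotvZl (dotvC e) ue !mulr0 addr0 add0r mulrA tt /q.
  by field; rewrite lam0 gt_eqF.
have [fv vv] := feasible_of_pencil Mv Av; exists (u + t *: e) => //.
by rewrite vv dotvDr dotvZr e1 mulr0 addr0 dotvC dotv_resolvent_ones.
Qed.

Lemma endpoint_choice lam : lam != 0 ->
  (forall l, eigenvalue A l -> l * lam <= lam ^+ 2) ->
  exists t, [/\ 0 <= t <= 1, lam \in kept_eigvals -> 0 < lam * dWsum (t / lam) /\ t < 1
              & lam \notin kept_eigvals -> t = 1].
Proof.
move=> lam0 extreme; case: (boolP (lam \in kept_eigvals)) => lk; last first.
  by exists 1; rewrite ler01 lexx.
have [d /andP [d0 d1] pos] : exists2 d, 0 < d <= 1 & 0 < lam * dWsum ((1 - d) / lam).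
  apply: sum_near_pole_gt0 => //; first exact: uniq_kept_eigvals.
    by move: lk; rewrite mem_kept_eigvals lt_def wcoef_ge0 andbT => /andP [].
  by move=> l; rewrite mem_kept_eigvals => /andP [/extreme ? _]; rewrite wcoef_ge0.
by exists (1 - d); rewrite subr_ge0 d1 gerBl ltW //= ltrBlDr ltrDl.
Qed.

Lemma endpoint_feasible lam t : eigenvalue A lam -> lam != 0 ->
  (lam \in kept_eigvals -> 0 < lam * dWsum (t / lam) /\ t < 1) ->
  (lam \notin kept_eigvals -> t = 1) ->
  no_pole (t / lam) -> lam * dWsum (t / lam) <= 0 ->
  exists2 v, feasible v & dotv v v = Wsum (t / lam).
Proof.
move=> el lam0 kept_pos unkept_t1 np h_le0.
have lk : lam \notin kept_eigvals.
  by apply/negP => /kept_pos [/lt_le_trans/(_ h_le0)]; rewrite ltxx.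
move: np h_le0; rewrite unkept_t1 // div1r => np h_le0.
apply: feasible_at_unkept_pole => //.
by apply/eqP; move: lk; rewrite mem_kept_eigvals el negbK.
Qed.

Section ExtremeEigenvalues.
Variables (lmin lmax : R).
Hypotheses (diagA : forall i, A i i = 0) (A_neq0 : A != 0).
Hypotheses (lmin_eig : eigenvalue A lmin) (lmax_eig : eigenvalue A lmax).
Hypotheses (lmin_le : forall l, eigenvalue A l -> lmin <= l)
           (lmax_ge : forall l, eigenvalue A l -> l <= lmax).

Let scaled_eq0 (b : R) : (forall l, eigenvalue A l -> 0 <= b * l) -> b *: A = 0.
Proof.
move=> bl; apply: psd_diag0_eq0 => [|i|w]; first by rewrite linearZ /= symA.
  by rewrite mxE diagA mulr0.
rewrite -[b *: A]add0r -(raddf0 (@scalar_mx R n)).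
by apply: psd_spectral => l /bl; rewrite add0r.
Qed.

Lemma lmax_gt0 : 0 < lmax.
Proof.
rewrite ltNge; apply: contra A_neq0 => lmax_le0.
have /eqP : (-1) *: A = 0.
  by apply: scaled_eq0 => l /lmax_ge; rewrite mulN1r oppr_ge0 => /le_trans; apply.
by rewrite scaler_eq0 oppr_eq0 oner_eq0.
Qed.

Lemma lmin_lt0 : lmin < 0.
Proof.
rewrite ltNge; apply: contra A_neq0 => lmin_ge0.
have /eqP : 1 *: A = 0 by apply: scaled_eq0 => l /lmin_le; rewrite mul1r; apply: le_trans.
by rewrite scaler_eq0 oner_eq0.
Qed.

Lemma pencil_psd x : lmin^-1 <= x <= lmax^-1 -> forall w, 0 <= dotv w (pencil x *m w).
Proof.
move=> Jx; rewrite pencilE; apply: psd_spectral => l el; rewrite mulNr mulrC.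
by apply: (one_sub_mul_ge0 lmin_lt0 lmax_gt0 _ Jx); rewrite lmin_le ?lmax_ge.
Qed.

Lemma feasible_le_W x v : lmin^-1 <= x <= lmax^-1 -> feasible v ->
  ((dotv v v)%:E <= W A x)%E.
Proof. by move/pencil_psd; exact: weak_duality. Qed.

Lemma no_pole_within a b y : lmin^-1 <= a -> b <= lmax^-1 ->
  (lmin \in kept_eigvals -> lmin^-1 < a) -> (lmax \in kept_eigvals -> b < lmax^-1) ->
  a <= y <= b -> no_pole y.
Proof.
move=> la bl ka kb /andP [ay yb] l lk; apply/eqP => pole.
have el : eigenvalue A l by move: lk; rewrite mem_kept_eigvals => /andP [].
have Jy : lmin^-1 <= y <= lmax^-1 by rewrite (le_trans la ay) (le_trans yb bl).
have lr : lmin <= l <= lmax by rewrite lmin_le ?lmax_ge.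
case: (one_sub_mul_eq0 lmin_lt0 lmax_gt0 lr Jy pole) => [[lE yE] | [lE yE]];
  rewrite lE in lk.
  by have := le_lt_trans yb (kb lk); rewrite yE ltxx.
by have := lt_le_trans (ka lk) ay; rewrite yE ltxx.
Qed.

Lemma strong_duality : exists2 x0, lmin^-1 <= x0 <= lmax^-1 &
  no_pole x0 /\ exists2 v, feasible v & dotv v v = Wsum x0.
Proof.
have lmax0 := lmax_gt0; have lmin0 := lmin_lt0.
have max_extreme l : eigenvalue A l -> l * lmax <= lmax ^+ 2.
  by move/lmax_ge; rewrite expr2 ler_pM2r.
have min_extreme l : eigenvalue A l -> l * lmin <= lmin ^+ 2.
  by move/lmin_le; rewrite expr2 ler_nM2r.
have [tb [/andP [tb0 tb1] bk bnk]] := endpoint_choice (lt0r_neq0 lmax0) max_extreme.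
have [ta [/andP [ta0 ta1] ak ank]] := endpoint_choice (ltr0_neq0 lmin0) min_extreme.
set a := ta / lmin; set b := tb / lmax.
have inv_lmin0 : lmin^-1 < 0 by rewrite invr_lt0.
have inv_lmax0 : 0 < lmax^-1 by rewrite invr_gt0.
have la : lmin^-1 <= a by rewrite /a -[leLHS]mul1r ler_nM2r.
have bl : b <= lmax^-1 by rewrite /b -[leRHS]mul1r ler_pM2r.
have ab : a <= b by rewrite (@le_trans _ _ 0) // ?mulr_ge0_le0 ?divr_ge0 // ltW.
have J y : a <= y <= b -> lmin^-1 <= y <= lmax^-1.
  by case/andP => ay yb; rewrite (le_trans la ay) (le_trans yb bl).
have np y : a <= y <= b -> no_pole y.
  apply: no_pole_within => // [/ak [_ ta_lt1] | /bk [_ tb_lt1]].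
    by rewrite /a -[ltLHS]mul1r ltr_nM2r.
  by rewrite /b -[ltRHS]mul1r ltr_pM2r.
have [ha | ha] := ltrP 0 (dWsum a).
  have aab : a <= a <= b by rewrite lexx ab.
  exists a; [exact: J | split; first exact: np].
  by apply: endpoint_feasible ak ank (np a aab) _; rewrite ?lt_eqF // nmulr_rle0 // ltW.
have [hb | hb] := ltrP (dWsum b) 0.
  have bab : a <= b <= b by rewrite lexx ab.
  exists b; [exact: J | split; first exact: np].
  by apply: endpoint_feasible bk bnk (np b bab) _; rewrite ?gt_eqF // pmulr_rle0 // ltW.
have hcont : {within `[a, b], continuous dWsum}.
  apply: continuous_in_subspaceT => y; rewrite inE /= in_itv /=.
  by move/np/dWsum_continuous.
have hv : Num.min (dWsum a) (dWsum b) <= 0 <= Num.max (dWsum a) (dWsum b).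
  by rewrite ge_min ha le_max hb orbT.
have [x0 x0ab hx0] := IVT ab hcont hv; rewrite in_itv /= in x0ab.
by exists x0; [exact: J | split; [exact: np | exact: feasible_of_dWsum0 (np _ x0ab) hx0]].
Qed.

End ExtremeEigenvalues.

End WeightFunction.

Theorem proposition2 (R : realType) (n : nat) (e : rel 'I_n) (A : 'M[R]_n)
  (lmin lmax : R) :
  (3 <= n)%N ->
  simple_graph e ->
  weighted_adjacency e A ->
  A != 0 ->
  lmin \in spectrum A -> (forall l, l \in spectrum A -> lmin <= l) ->
  lmax \in spectrum A -> (forall l, l \in spectrum A -> l <= lmax) ->
  exists2 x0 : R, lmin^-1 <= x0 <= lmax^-1 &
    ereal_sup [set (dotv v v)%:E | v in [set v | Sn v /\ dotv v (A *m v) = 0]]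
      = W A x0
    /\ (forall x : R, lmin^-1 <= x <= lmax^-1 -> (W A x0 <= W A x)%E).
Proof.
move=> _ _ [symA [diagA _]] A_neq0.
rewrite /spectrum !inE => lmin_eig lmin_le lmax_eig lmax_ge.
have {}lmin_le l : eigenvalue A l -> lmin <= l by move=> el; apply: lmin_le; rewrite inE.
have {}lmax_ge l : eigenvalue A l -> l <= lmax by move=> el; apply: lmax_ge; rewrite inE.
have weak := feasible_le_W symA diagA A_neq0 lmin_le lmax_ge.
have [x0 Jx0 [np [v fv vv]]] :=
  strong_duality symA diagA A_neq0 lmin_eig lmax_eig lmin_le lmax_ge.
have Wx0 : W A x0 = (dotv v v)%:E by rewrite W_no_pole // vv.
exists x0 => //; split => [|x Jx]; last by rewrite Wx0; exact: weak.
apply/le_anti/andP; split; first by apply: ge_ereal_sup => _ [w fw <-]; exact: weak.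
by rewrite Wx0; apply: ereal_sup_ubound; exists v.
Qed.
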